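(* For every positive integer $k$, any deterministic distributed algorithm in the LOCAL model that finds a proper $4$-coloring of $G_k$ (for every assignment of unique identifiers to its vertices) requires at least $k=\frac{1}{8}(|V(G_k)|-2)$ rounds.
   Context: The planar graphs $G_k$ are defined inductively. $G_0$ has vertex set $\{v_{(0,1)},v_{(0,2)}\}$ and the single edge $\{v_{(0,1)},v_{(0,2)}\}$. For $i\ge 1$, $G_i$ is obtained from $G_{i-1}$ by adding, for each $j\in\{1,2\}$, four new vertices $a_{(i,j)},b_{(i,j)},c_{(i,j)},v_{(i,j)}$ and the edges $\{a_{(i,j)},b_{(i,j)}\},\{b_{(i,j)},c_{(i,j)}\},\{c_{(i,j)},a_{(i,j)}\}$, $\{a_{(i,j)},v_{(i,j)}\},\{b_{(i,j)},v_{(i,j)}\},\{c_{(i,j)},v_{(i,j)}\}$, $\{a_{(i,j)},v_{(i-1,j)}\},\{b_{(i,j)},v_{(i-1,j)}\},\{c_{(i,j)},v_{(i-1,j)}\}$. LOCAL model: the network is the graph, each vertex has a unique identifier, and in synchronous rounds each vertex receives the previous round's messages, computes arbitrarily and sends messages of unbounded size to its neighbors; at the end each vertex outputs its color. A proper $4$-coloring assigns colors in $\{1,2,3,4\}$ with adjacent vertices colored differently. *)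

From mathcomp Require Import all_boot.
Set Implicit Arguments. Unset Strict Implicit. Unset Printing Implicit Defensive.

(* Vertices: inl j           = v_(0,j+1)               (j : 'I_2)      *)
(*           inr (i, j, l)   = layer (i+1), side (j+1), where          *)
(*                             l = 0,1,2 stand for a,b,c and l = 3     *)
(*                             stands for v_(i+1, j+1).                *)
Definition GV (k : nat) : finType := ('I_2 + 'I_k * 'I_2 * 'I_4)%type.

(* [is_v x i j] : x is the vertex v_(i, j) (i a layer number 0..k). *)
Definition is_v k (x : GV k) (i : nat) (j : 'I_2) : bool :=
  match x with
  | inl j' => (i == 0) && (j' == j)
  | inr (i', j', l) => (i == (nat_of_ord i').+1) && (j' == j) && (nat_of_ord l == 3)
  end.

(* Edges of the layer-(i+1) gadget, oriented towards the gadget vertex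
   y = a/b/c_(i+1,j): y is adjacent to the other two triangle vertices,
   to v_(i+1,j) and to v_(i,j). *)
Definition gadget_edge k (x y : GV k) : bool :=
  match y with
  | inl _ => false
  | inr (i, j, l) =>
      (nat_of_ord l < 3) &&
      [|| is_v x i j, is_v x i.+1 j
        | match x with
          | inl _ => false
          | inr (i', j', l') =>
              (i' == i) && (j' == j) && (nat_of_ord l' < 3) && (l' != l)
          end]
  end.

Definition base_edge k (x y : GV k) : bool :=
  match x, y with
  | inl j, inl j' => j != j'
  | _, _ => false
  end.

Definition Gadj k (x y : GV k) : bool :=
  [|| base_edge x y, gadget_edge x y | gadget_edge y x].

Definition degree k (v : GV k) : nat := #|[pred u | Gadj v u]|.

(* Proper 4-colouring (colours 'I_4, i.e. {0,1,2,3} standing for {1,2,3,4}). *)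
Definition proper_4coloring k (c : GV k -> 'I_4) : Prop :=
  forall x y : GV k, Gadj x y -> c x <> c y.

(* Deterministic LOCAL algorithms (full-information form).             *)
(* A vertex starts in state [init id deg] from its identifier and its  *)
(* degree; in every round each vertex sends its whole current state to *)
(* all neighbours (messages of unbounded size), and updates its state  *)
(* by an arbitrary function [step] of its own state and of the set of *)
(* states received.  After the last round it outputs [out state].      *)
Fixpoint run (S : Type) (init : nat -> nat -> S) (step : S -> (S -> Prop) -> S)
    k (id : GV k -> nat) (t : nat) (v : GV k) : S :=
  match t with
  | 0 => init (id v) (degree v)
  | t'.+1 =>
      step (run init step id t' v)
           (fun s => exists u, Gadj v u /\ run init step id t' u = s)
  end.

From mathcomp Require Import all_boot zify.
From Stdlib Require Import FunctionalExtensionality PropExtensionality.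

Set Implicit Arguments. Unset Strict Implicit. Unset Printing Implicit Defensive.

(* In every layer, v_(i-1,j) and v_(i,j) are both adjacent to the triangle
   a_(i,j) b_(i,j) c_(i,j), so a proper 4-colouring gives them the single colour
   left free by the triangle; hence v_(k,1) and v_(k,2) inherit the distinct
   colours of v_(0,1) and v_(0,2).  But v_(k,j) is at distance 2k from the base
   edge, so after fewer than 2k rounds its output only depends on the
   identifiers of side j.  Number side 1 by the a-th block of identifiers and
   side 2 by the mirror image of the b-th block: by the mirror symmetry of G_k
   the colours at v_(k,1) and v_(k,2) are then col a and col b for one function
   col, which must be injective on five blocks with only four colours. *)

Lemma notin_codom_eq (aT T : finType) (f : aT -> T) (w w' : T) :
  injective f -> #|T| = #|aT|.+1 ->
  w \notin codom f -> w' \notin codom f -> w = w'.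
Proof.
move=> f_inj cardT w_f w'_f.
have : #|[predC [in codom f]]| <= 1.
  by have := cardC [in codom f]; rewrite card_codom // cardT -addn1 => /addnI ->.
by move/card_le1_eqP; apply; rewrite !inE.
Qed.

Section Graph.
Variable k : nat.
Implicit Types (x y v w : GV k) (t : nat).

Definition side x : 'I_2 :=
  match x with inl j => j | inr (_, j, _) => j end.

(* The distance from [x] to v_(0, side x). *)
Definition level x : nat :=
  match x with
  | inl _ => 0
  | inr (i, _, l) => if nat_of_ord l == 3 then (2 * i).+2 else (2 * i).+1
  end.

Lemma gadget_edge_level x y : gadget_edge x y ->
  side x = side y /\ level x <= (level y).+1 /\ level y <= (level x).+1.
Proof.
case: y => [//|[[i j] l]] /= /andP[l_lt3].
have -> : (nat_of_ord l == 3) = false by apply/eqP; lia.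
case: x => [j'|[[i' j'] l']] /=.
  by rewrite orbF => /andP[/eqP i0 /eqP ->]; split=> //; lia.
case/or3P => [|
 |/andP[/andP[/andP[/eqP -> /eqP ->] l'_lt3] _]]; last first.
- have -> : (nat_of_ord l' == 3) = false by apply/eqP; lia.
  by split=> //; lia.
all: by case/andP=> /andP[/eqP hi /eqP ->] /eqP l3; rewrite l3 /=; split=> //; lia.
Qed.

Lemma Gadj_level x y : Gadj x y ->
  level x <= (level y).+1 /\ (0 < level x -> side y = side x).
Proof.
case/or3P => [|/gadget_edge_level[-> []]|/gadget_edge_level[-> []]] //.
by case: x => // j; case: y.
Qed.

Fixpoint ball t v w : Prop :=
  match t with
  | 0 => w = v
  | t'.+1 => w = v \/ exists2 u, Gadj v u & ball t' u w
  end.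

Lemma ballS t v w : ball t v w -> ball t.+1 v w.
Proof.
elim: t v => [|t IH] v /=; first by left.
by case=> [->|[u vu uw]]; [left | right; exists u => //; apply: IH].
Qed.

Lemma ball_side t v w : ball t v w -> t < level v -> side w = side v.
Proof.
elim: t v => [|t IH] v /=; first by move=> ->.
case=> [-> //|[u vu uw] t_lt].
have [lv_le side_u] := Gadj_level vu.
by rewrite (IH u) // ?side_u //; lia.
Qed.

Lemma rev_ord2_eq0 (j : 'I_2) : (rev_ord j == ord0) = (j != ord0).
Proof. by case: j => -[|[|]]. Qed.

Definition mirror x : GV k :=
  match x with
  | inl j => inl (rev_ord j)
  | inr (i, j, l) => inr (i, rev_ord j, l)
  end.

Lemma mirrorK : involutive mirror.
Proof. by case=> [j|[[i j] l]] /=; rewrite rev_ordK. Qed.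

Lemma side_mirror x : side (mirror x) = rev_ord (side x).
Proof. by case: x => [|[[]]]. Qed.

Lemma mirror_inj : injective mirror.
Proof. exact: inv_inj mirrorK. Qed.

Lemma is_v_mirror x i j : is_v (mirror x) i (rev_ord j) = is_v x i j.
Proof. by case: x => [j'|[[i' j'] l']] /=; rewrite (inj_eq rev_ord_inj). Qed.

Lemma Gadj_mirror : {mono mirror : x y / Gadj x y}.
Proof.
move=> x y; rewrite /Gadj /base_edge /gadget_edge.
by case: x => [j'|[[i' j'] l']]; case: y => [j|[[i j] l]] /=;
  rewrite ?is_v_mirror ?(inj_eq rev_ord_inj).
Qed.

Section Run.
Variables (S : Type) (init : nat -> nat -> S) (step : S -> (S -> Prop) -> S).

Lemma degree_automorphism (s : GV k -> GV k) v :
  injective s -> {mono s : x y / Gadj x y} -> degree (s v) = degree v.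
Proof.
move=> s_inj s_mono; rewrite /degree.
have -> : #|[pred u | Gadj v u]| = #|[preim s of [pred u | Gadj (s v) u]]|.
  by apply: eq_card => u; rewrite !inE s_mono.
rewrite card_preim //; apply: eq_card => u; rewrite !inE.
have [s' _ sK] := injF_bij s_inj.
by have -> : u \in codom s by rewrite -[u]sK codom_f.
Qed.

Lemma run_automorphism (s : GV k -> GV k) (id : GV k -> nat) t v :
  injective s -> {mono s : x y / Gadj x y} ->
  run init step (id \o s) t v = run init step id t (s v).
Proof.
move=> s_inj s_mono; have [s' s'K sK] := injF_bij s_inj.
elim: t v => [|t IH] v /=; first by rewrite degree_automorphism.
rewrite IH; congr (step _ _).
apply: functional_extensionality => st; apply: propositional_extensionality.
split=> -[u [vu <-]].
  by exists (s u); rewrite s_mono IH.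
by exists (s' u); rewrite IH -s_mono !sK.
Qed.

Lemma run_local (id id' : GV k -> nat) t v :
  (forall w, ball t v w -> id w = id' w) ->
  run init step id t v = run init step id' t v.
Proof.
elim: t v => [|t IH] v id_eq /=; first by rewrite id_eq.
rewrite IH => [|w /ballS]; last exact: id_eq.
congr (step _ _).
apply: functional_extensionality => st; apply: propositional_extensionality.
by split=> -[u [vu <-]]; exists u; rewrite IH // => w uw; apply: id_eq; right; exists u.
Qed.

End Run.

Definition tri (i : 'I_k) (j : 'I_2) (l : 'I_3) : GV k :=
  inr (i, j, widen_ord (leqnSn 3) l).

Definition layer_v (i : 'I_k) (j : 'I_2) : GV k := inr (i, j, ord_max).

Lemma Gadj_tri i j (l l' : 'I_3) : l != l' -> Gadj (tri i j l) (tri i j l').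
Proof.
move=> neq_ll'; rewrite /Gadj /gadget_edge /= !ltn_ord !eqxx /=.
by rewrite -val_eqE /= val_eqE eq_sym neq_ll' !orbT.
Qed.

Lemma Gadj_is_v_tri (i : 'I_k) j l x :
  is_v x i j || is_v x i.+1 j -> Gadj x (tri i j l).
Proof. by rewrite /Gadj /gadget_edge /= ltn_ord => /orP[] ->; rewrite ?orbT. Qed.

Lemma is_v_layer_v i j : is_v (layer_v i j) i.+1 j.
Proof. by rewrite /= !eqxx. Qed.

Section ProperColoring.
Variable c : GV k -> 'I_4.
Hypothesis c_proper : proper_4coloring c.

Lemma proper_gadget_eq (i : 'I_k) j x : is_v x i j -> c x = c (layer_v i j).
Proof.
have tri_inj : injective (c \o tri i j).
  by move=> l l' eq_c; apply/eqP/negPn/negP => /(Gadj_tri i j)/c_proper.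
have notin_tri y : is_v y i j || is_v y i.+1 j -> c y \notin codom (c \o tri i j).
  by move=> y_v; apply/codomP => -[l]; apply: c_proper; apply: Gadj_is_v_tri.
move=> x_v; apply: (notin_codom_eq tri_inj); rewrite ?card_ord ?notin_tri //.
  by rewrite x_v.
by rewrite is_v_layer_v orbT.
Qed.

Lemma proper_layer_v i j : c (layer_v i j) = c (inl j).
Proof.
case: i => m; elim: m => [|m IH] m_lt.
  by symmetry; apply: proper_gadget_eq; rewrite /= !eqxx.
rewrite -(IH (ltnW m_lt)); symmetry; apply: proper_gadget_eq; exact: is_v_layer_v.
Qed.

Lemma proper_layer_v_mirror i j : c (mirror (layer_v i j)) <> c (layer_v i j).
Proof.
rewrite [mirror _]/= !proper_layer_v; apply: c_proper.
by rewrite /Gadj /base_edge; case: j => -[|[|]].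
Qed.

End ProperColoring.

Definition to_side0 x : GV k := if side x == ord0 then x else mirror x.

Definition label (a b : nat) x : nat :=
  (if side x == ord0 then a else b) * #|GV k| + enum_rank (to_side0 x).

Lemma label_side0 a b b' w : side w = ord0 -> label a b w = label a b' w.
Proof. by rewrite /label => ->. Qed.

Lemma to_side0_mirror x : to_side0 (mirror x) = to_side0 x.
Proof. by rewrite /to_side0 side_mirror rev_ord2_eq0 mirrorK; case: eqP. Qed.

Lemma label_mirror a b x : label a b (mirror x) = label b a x.
Proof. by rewrite /label to_side0_mirror side_mirror rev_ord2_eq0; case: eqP. Qed.

Lemma label_inj a b : a != b -> injective (label a b).
Proof.
move=> neq_ab x y /(congr1 (edivn^~ #|GV k|)).
rewrite !edivn_eq ?ltn_ord // /to_side0 => -[eq_ab /val_inj/enum_rank_inj].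
by case: eqP eq_ab => _; case: eqP => _ eq_ab; rewrite ?eq_ab ?eqxx in neq_ab;
  last exact: mirror_inj.
Qed.

End Graph.

Lemma card_GV k : #|GV k| = 8 * k + 2.
Proof. by rewrite card_sum !card_prod !card_ord; lia. Qed.

Lemma local_4coloring_rounds_lb k S init step (out : S -> 'I_4) r : 0 < k ->
  (forall id : GV k -> nat, injective id ->
     proper_4coloring (fun v => out (run init step id r v))) ->
  2 * k <= r.
Proof.
move=> k_gt0 alg_proper; rewrite leqNgt; apply/negP => r_lt.
have last_lt : k.-1 < k by rewrite ltn_predL.
pose v := layer_v (Ordinal last_lt) ord0.
have ball_v_side w : ball r v w -> side w = ord0.
  by move/ball_side; apply; rewrite /=; lia.
pose col a := out (run init step (label a 0) r v).
have col_v a b : out (run init step (label a b) r v) = col a.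
  by congr out; apply: run_local => w /ball_v_side; apply: label_side0.
have col_mirror a b : out (run init step (label a b) r (mirror v)) = col b.
  rewrite -(col_v b a) -run_automorphism; last exact: Gadj_mirror.
    by congr out; apply: run_local => w _; apply: label_mirror.
  exact: mirror_inj.
have col_inj : injective (fun a : 'I_5 => col a).
  move=> a1 a2 eq_col; apply/val_inj/eqP/negPn/negP => neq_a.
  apply: (proper_layer_v_mirror (alg_proper _ (label_inj neq_a))
           (i := Ordinal last_lt) (j := ord0)).
  by rewrite col_v col_mirror.
by have := leq_card _ col_inj; rewrite !card_ord.
Qed.

Theorem lemma6p5 (k : nat) (hk : 0 < k)
    (S : Type) (init : nat -> nat -> S) (step : S -> (S -> Prop) -> S)
    (out : S -> 'I_4) (r : nat) :
  (forall id : GV k -> nat, injective id ->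
     proper_4coloring (fun v => out (run init step id r v))) ->
  k <= r /\ k = (#|GV k| - 2) %/ 8.
Proof.
move=> alg_proper; split; last by rewrite card_GV addnK mulKn.
by apply: leq_trans (local_4coloring_rounds_lb hk alg_proper); rewrite leq_pmull.
Qed.
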